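(* Let $(\boldsymbol{x}^1,\boldsymbol{x}^2)\in(\mathbb{T}^3\times\mathbb{T}^3)\setminus\Delta$ and, for $\omega_1,\omega_2,\dots\in\Omega_0$, set $\boldsymbol{x}^j_0=\boldsymbol{x}^j$, $\boldsymbol{x}^j_n=f_{\omega_n}(\boldsymbol{x}^j_{n-1})=(x^j_n,y^j_n,z^j_n)$ for $j=1,2$. Then for any $\varepsilon>0$ there exist $N_1\in\mathbb{N}$ and $(\omega_1,\dots,\omega_{N_1})\in\Omega_0^{N_1}$ such that $x^1_{N_1}=x^2_{N_1}$, $y^1_{N_1}=y^2_{N_1}$ and $|z^1_{N_1}-z^2_{N_1}|<\varepsilon$. In particular $\mathrm{dist}_{\mathbb{T}^3}(\boldsymbol{x}^1_{N_1},\boldsymbol{x}^2_{N_1})<\varepsilon$.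
   Context: $\mathbb{T}^3=\mathbb{R}^3/(2\pi\mathbb{Z})^3$ with points $\boldsymbol{x}=(x,y,z)$ and its standard flat distance $\mathrm{dist}_{\mathbb{T}^3}$; $\Delta=\{(\boldsymbol{x}^1,\boldsymbol{x}^2):\boldsymbol{x}^1=\boldsymbol{x}^2\}$. Fix $U>0$ and let $\Omega_0=[-U,U]^3\times[0,2\pi)^3$, with elements $\omega=(\mathsf{A},\mathsf{B},\mathsf{C},\alpha,\beta,\gamma)$. Define maps of $\mathbb{T}^3$: $f_{(\mathsf{A},\alpha)}(x,y,z)=(x+\mathsf{A}\sin(z+\alpha),\ y+\mathsf{A}\cos(z+\alpha),\ z)$, $f_{(\mathsf{B},\beta)}(x,y,z)=(x,\ y+\mathsf{B}\sin(x+\beta),\ z+\mathsf{B}\cos(x+\beta))$, $f_{(\mathsf{C},\gamma)}(x,y,z)=(x+\mathsf{C}\cos(y+\gamma),\ y,\ z+\mathsf{C}\sin(y+\gamma))$, and $f_\omega=f_{(\mathsf{C},\gamma)}\circ f_{(\mathsf{B},\beta)}\circ f_{(\mathsf{A},\alpha)}$. *)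

From Stdlib Require Import Reals Lra ZArith List.
Open Scope R_scope.

(* Points of T^3 = R^3/(2 pi Z)^3 are represented by representatives in R^3. *)
Definition pt := (R * R * R)%type.

Definition eqmod2pi (a b : R) : Prop := exists k : Z, a - b = 2 * PI * IZR k.

Definition eqT3 (p q : pt) : Prop :=
  match p, q with
  | (x1, y1, z1), (x2, y2, z2) => eqmod2pi x1 x2 /\ eqmod2pi y1 y2 /\ eqmod2pi z1 z2
  end.

(* Flat distance on the circle R/2piZ: min_k |a - b - 2 pi k|. *)
Definition distS1 (a b : R) : R :=
  let d := a - b in
  let r := d - 2 * PI * IZR (Int_part (d / (2 * PI))) in   (* r in [0, 2pi) *)
  Rmin r (2 * PI - r).

Definition distT3 (p q : pt) : R :=
  match p, q with
  | (x1, y1, z1), (x2, y2, z2) =>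
      sqrt (distS1 x1 x2 ^ 2 + distS1 y1 y2 ^ 2 + distS1 z1 z2 ^ 2)
  end.

Record omega := mkOmega { oA : R; oB : R; oC : R; oal : R; obe : R; oga : R }.

Definition inOmega0 (U : R) (w : omega) : Prop :=
  -U <= oA w <= U /\ -U <= oB w <= U /\ -U <= oC w <= U /\
  0 <= oal w < 2 * PI /\ 0 <= obe w < 2 * PI /\ 0 <= oga w < 2 * PI.

Definition fA (A al : R) (p : pt) : pt :=
  let '(x, y, z) := p in (x + A * sin (z + al), y + A * cos (z + al), z).
Definition fB (B be : R) (p : pt) : pt :=
  let '(x, y, z) := p in (x, y + B * sin (x + be), z + B * cos (x + be)).
Definition fC (C ga : R) (p : pt) : pt :=
  let '(x, y, z) := p in (x + C * cos (y + ga), y, z + C * sin (y + ga)).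

Definition f_omega (w : omega) (p : pt) : pt :=
  fC (oC w) (oga w) (fB (oB w) (obe w) (fA (oA w) (oal w) p)).

Definition orbit (ws : list omega) (p : pt) : pt :=
  fold_left (fun q w => f_omega w q) ws p.

(* Each f_(A,alpha) is a shear: it fixes z and translates (x, y) by
   A (sin (z + alpha), cos (z + alpha)), so n repetitions translate by n times that
   vector; likewise f_(B,beta) fixes x and moves (y, z), and f_(C,gamma) fixes y and
   moves (x, z).  For two points whose z-coordinates differ modulo 2 pi, centring
   alpha between them makes the two x-translations differ by
   2 n A sin ((z1 - z2) / 2) <> 0 while the y-translations agree, so with |A| <= U
   and n large the x-difference can be changed by any prescribed amount; a quarter
   period shift of alpha does the same for the y-difference.  Distinct points differ
   modulo 2 pi in some coordinate: shears of type A or C make the x-difference pi,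
   shears of type B then make the z-difference a small d > 0, and shears of type A
   finally cancel the x- and y-differences. *)

From Stdlib Require Import Reals Lra Lia List Classical.
Open Scope R_scope.

Lemma eqmod2pi_refl (a : R) : eqmod2pi a a.
Proof. exists 0%Z. lra. Qed.

Lemma not_eqmod2pi_of_sub_bounds (a b : R) : 0 < a - b < 2 * PI -> ~ eqmod2pi a b.
Proof.
  intros Hab [k Hk]. pose proof PI_RGT_0.
  assert (Hk0 : (0 < k)%Z).
  { apply lt_IZR. apply (Rmult_lt_reg_l (2 * PI)); lra. }
  assert (Hk1 : (k < 1)%Z).
  { apply lt_IZR. apply (Rmult_lt_reg_l (2 * PI)); lra. }
  lia.
Qed.

Lemma sin_half_sub_neq0 (a b : R) : ~ eqmod2pi a b -> sin ((a - b) / 2) <> 0.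
Proof. intros Hab E. apply Hab. destruct (sin_eq_0_0 _ E) as [k Hk]. exists k. lra. Qed.

Lemma sin_cos_2PI_mult (k : Z) : sin (2 * PI * IZR k) = 0 /\ cos (2 * PI * IZR k) = 1.
Proof.
  assert (Hs : sin (IZR k * PI) = 0) by (apply sin_eq_0_1; now exists k).
  split.
  - apply sin_eq_0_1. exists (2 * k)%Z. rewrite mult_IZR. ring.
  - replace (2 * PI * IZR k) with (2 * (IZR k * PI)) by ring.
    rewrite cos_2a_sin, Hs. ring.
Qed.

Lemma eqmod2pi_sin_cos (a b : R) : eqmod2pi a b -> sin a = sin b /\ cos a = cos b.
Proof.
  intros [k Hk]. replace a with (b + 2 * PI * IZR k) by lra.
  destruct (sin_cos_2PI_mult k) as [Hs Hc].
  rewrite sin_plus, cos_plus, Hs, Hc. split; ring.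
Qed.

(* [distS1 a b] unfolds to [Rmin (angle_rep (a - b)) (2 * PI - angle_rep (a - b))]. *)
Definition angle_rep (phi : R) : R := phi - 2 * PI * IZR (Int_part (phi / (2 * PI))).

Lemma angle_rep_bounds (phi : R) : 0 <= angle_rep phi < 2 * PI.
Proof.
  pose proof PI_RGT_0. unfold angle_rep.
  destruct (base_Int_part (phi / (2 * PI))) as [H1 H2].
  assert (E : phi = 2 * PI * (phi / (2 * PI))) by (field; lra).
  split; nra.
Qed.

Lemma angle_rep_id (phi : R) : 0 <= phi < 2 * PI -> angle_rep phi = phi.
Proof.
  intro Hphi. pose proof PI_RGT_0. unfold angle_rep.
  destruct (base_Int_part (phi / (2 * PI))) as [H1 H2].
  assert (E : phi = 2 * PI * (phi / (2 * PI))) by (field; lra).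
  assert (Hq : 0 <= phi / (2 * PI) < 1) by (split; nra).
  assert (Hk : Int_part (phi / (2 * PI)) = 0%Z).
  { assert (-1 < Int_part (phi / (2 * PI)) < 1)%Z by (split; apply lt_IZR; simpl; lra).
    lia. }
  rewrite Hk. ring.
Qed.

Lemma sin_cos_angle_rep (t phi : R) :
  sin (t + angle_rep phi) = sin (t + phi) /\ cos (t + angle_rep phi) = cos (t + phi).
Proof.
  apply eqmod2pi_sin_cos. exists (- Int_part (phi / (2 * PI)))%Z.
  unfold angle_rep. rewrite opp_IZR. ring.
Qed.

Lemma distS1_eq_sub (a b : R) : 0 <= a - b <= PI -> distS1 a b = a - b.
Proof.
  intro Hab. pose proof PI_RGT_0.
  change (Rmin (angle_rep (a - b)) (2 * PI - angle_rep (a - b)) = a - b).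
  rewrite angle_rep_id by lra. apply Rmin_left. lra.
Qed.

Lemma distT3_vertical (x y z1 z2 : R) :
  0 <= z1 - z2 <= PI -> distT3 (x, y, z1) (x, y, z2) = z1 - z2.
Proof.
  intro Hz. unfold distT3.
  rewrite !distS1_eq_sub by lra.
  replace ((x - x) ^ 2 + (y - y) ^ 2 + (z1 - z2) ^ 2) with ((z1 - z2) ^ 2) by ring.
  apply sqrt_pow2. lra.
Qed.

Lemma bounded_step_decomposition (U D T : R) : 0 < U -> D <> 0 ->
  exists (n : nat) (a : R), -U <= a <= U /\ INR n * a * D = T.
Proof.
  intros HU HD. pose proof (Rabs_pos_lt D HD) as HaD.
  destruct (INR_unbounded (Rabs T / (U * Rabs D))) as [n Hn].
  assert (HTn : Rabs T < U * (INR n * Rabs D)).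
  { replace (Rabs T) with (Rabs T / (U * Rabs D) * (U * Rabs D)) by (field; lra).
    replace (U * (INR n * Rabs D)) with (INR n * (U * Rabs D)) by ring.
    apply Rmult_lt_compat_r; nra. }
  assert (Hn0 : 0 < INR n).
  { destruct (Rle_lt_or_eq_dec 0 (INR n) (pos_INR n)) as [|E]; [auto|].
    rewrite <- E in HTn. pose proof (Rabs_pos T). lra. }
  set (a := T / (INR n * D)).
  assert (Ha : a * (INR n * D) = T) by (unfold a; field; lra).
  assert (Habs : Rabs a * (INR n * Rabs D) = Rabs T).
  { rewrite <- Ha, !Rabs_mult, (Rabs_pos_eq (INR n)); lra. }
  exists n, a. split.
  - assert (HK : 0 < INR n * Rabs D) by (apply Rmult_lt_0_compat; lra).
    assert (Rabs a < U) by nra.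
    destruct (Rabs_def2 a U); lra.
  - lra.
Qed.

Definition omegaA (a phi : R) : omega := mkOmega a 0 0 (angle_rep phi) 0 0.
Definition omegaB (b phi : R) : omega := mkOmega 0 b 0 0 (angle_rep phi) 0.
Definition omegaC (c phi : R) : omega := mkOmega 0 0 c 0 0 (angle_rep phi).

Lemma orbit_cons (w : omega) (ws : list omega) (p : pt) :
  orbit (w :: ws) p = orbit ws (f_omega w p).
Proof. reflexivity. Qed.

Lemma orbit_app (ws1 ws2 : list omega) (p : pt) :
  orbit (ws1 ++ ws2) p = orbit ws2 (orbit ws1 p).
Proof. apply fold_left_app. Qed.

Lemma Forall_repeat {A : Type} (P : A -> Prop) (x : A) (n : nat) :
  P x -> Forall P (repeat x n).
Proof. intro Hx. induction n; constructor; auto. Qed.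

Lemma pt_eq (x y z x' y' z' : R) : x = x' -> y = y' -> z = z' -> (x, y, z) = (x', y', z').
Proof. intros -> -> ->. reflexivity. Qed.

Lemma fA_zero (al : R) (p : pt) : fA 0 al p = p.
Proof. destruct p as [[x y] z]. apply pt_eq; ring. Qed.

Lemma fB_zero (be : R) (p : pt) : fB 0 be p = p.
Proof. destruct p as [[x y] z]. apply pt_eq; ring. Qed.

Lemma fC_zero (ga : R) (p : pt) : fC 0 ga p = p.
Proof. destruct p as [[x y] z]. apply pt_eq; ring. Qed.

Lemma f_omega_omegaA (a phi x y z : R) :
  f_omega (omegaA a phi) (x, y, z) = (x + a * sin (z + phi), y + a * cos (z + phi), z).
Proof.
  unfold f_omega, omegaA; cbn [oA oB oC oal obe oga].
  rewrite ?fA_zero, ?fB_zero, ?fC_zero. unfold fA.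
  destruct (sin_cos_angle_rep z phi) as [-> ->]. reflexivity.
Qed.

Lemma f_omega_omegaB (b phi x y z : R) :
  f_omega (omegaB b phi) (x, y, z) = (x, y + b * sin (x + phi), z + b * cos (x + phi)).
Proof.
  unfold f_omega, omegaB; cbn [oA oB oC oal obe oga].
  rewrite ?fA_zero, ?fB_zero, ?fC_zero. unfold fB.
  destruct (sin_cos_angle_rep x phi) as [-> ->]. reflexivity.
Qed.

Lemma f_omega_omegaC (c phi x y z : R) :
  f_omega (omegaC c phi) (x, y, z) = (x + c * cos (y + phi), y, z + c * sin (y + phi)).
Proof.
  unfold f_omega, omegaC; cbn [oA oB oC oal obe oga].
  rewrite ?fA_zero, ?fB_zero, ?fC_zero. unfold fC.
  destruct (sin_cos_angle_rep y phi) as [-> ->]. reflexivity.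
Qed.

Lemma orbit_repeat_omegaA (n : nat) (a phi x y z : R) :
  orbit (repeat (omegaA a phi) n) (x, y, z) =
  (x + INR n * a * sin (z + phi), y + INR n * a * cos (z + phi), z).
Proof.
  revert x y. induction n as [|n IH]; intros x y.
  - cbn. apply pt_eq; ring.
  - cbn [repeat]. rewrite orbit_cons, f_omega_omegaA, IH, S_INR. apply pt_eq; ring.
Qed.

Lemma orbit_repeat_omegaB (n : nat) (b phi x y z : R) :
  orbit (repeat (omegaB b phi) n) (x, y, z) =
  (x, y + INR n * b * sin (x + phi), z + INR n * b * cos (x + phi)).
Proof.
  revert y z. induction n as [|n IH]; intros y z.
  - cbn. apply pt_eq; ring.
  - cbn [repeat]. rewrite orbit_cons, f_omega_omegaB, IH, S_INR. apply pt_eq; ring.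
Qed.

Lemma orbit_repeat_omegaC (n : nat) (c phi x y z : R) :
  orbit (repeat (omegaC c phi) n) (x, y, z) =
  (x + INR n * c * cos (y + phi), y, z + INR n * c * sin (y + phi)).
Proof.
  revert x z. induction n as [|n IH]; intros x z.
  - cbn. apply pt_eq; ring.
  - cbn [repeat]. rewrite orbit_cons, f_omega_omegaC, IH, S_INR. apply pt_eq; ring.
Qed.

Lemma inOmega0_omegaA (U a phi : R) : -U <= a <= U -> inOmega0 U (omegaA a phi).
Proof.
  intro Ha. pose proof PI_RGT_0. pose proof (angle_rep_bounds phi).
  unfold inOmega0; cbn. repeat split; lra.
Qed.

Lemma inOmega0_omegaB (U b phi : R) : -U <= b <= U -> inOmega0 U (omegaB b phi).
Proof.
  intro Hb. pose proof PI_RGT_0. pose proof (angle_rep_bounds phi).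
  unfold inOmega0; cbn. repeat split; lra.
Qed.

Lemma inOmega0_omegaC (U c phi : R) : -U <= c <= U -> inOmega0 U (omegaC c phi).
Proof.
  intro Hc. pose proof PI_RGT_0. pose proof (angle_rep_bounds phi).
  unfold inOmega0; cbn. repeat split; lra.
Qed.

Definition reach (U : R) (p1 p2 q1 q2 : pt) : Prop :=
  exists ws, Forall (inOmega0 U) ws /\ orbit ws p1 = q1 /\ orbit ws p2 = q2.

Lemma reach_refl (U : R) (p1 p2 : pt) : reach U p1 p2 p1 p2.
Proof. exists nil. repeat split; constructor. Qed.

Lemma reach_trans (U : R) (p1 p2 q1 q2 r1 r2 : pt) :
  reach U p1 p2 q1 q2 -> reach U q1 q2 r1 r2 -> reach U p1 p2 r1 r2.
Proof.
  intros (ws1 & F1 & E1 & E2) (ws2 & F2 & E3 & E4).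
  exists (ws1 ++ ws2). rewrite !orbit_app, E1, E2.
  split; [apply Forall_app|]; auto.
Qed.

Section Steering.

Variable U : R.
Hypothesis HU : 0 < U.

(* With the phase [phi] centred between [t1] and [t2] the two sines differ by
   [2 sin ((t1 - t2) / 2)] while the cosines agree. *)
Lemma steer_sin (t1 t2 T : R) : ~ eqmod2pi t1 t2 ->
  exists (n : nat) (a phi : R), -U <= a <= U /\
    INR n * a * (sin (t1 + phi) - sin (t2 + phi)) = T /\ cos (t1 + phi) = cos (t2 + phi).
Proof.
  intro Ht. set (h := (t1 - t2) / 2).
  destruct (bounded_step_decomposition U (2 * sin h) T HU) as (n & a & Ha & HT).
  { pose proof (sin_half_sub_neq0 _ _ Ht) as Hh. fold h in Hh. lra. }
  exists n, a, (- ((t1 + t2) / 2)).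
  replace (t1 + - ((t1 + t2) / 2)) with h by (unfold h; field).
  replace (t2 + - ((t1 + t2) / 2)) with (- h) by (unfold h; field).
  rewrite sin_neg, cos_neg. split; [exact Ha | split; [rewrite <- HT; ring | reflexivity]].
Qed.

Lemma steer_cos (t1 t2 T : R) : ~ eqmod2pi t1 t2 ->
  exists (n : nat) (a phi : R), -U <= a <= U /\
    INR n * a * (cos (t1 + phi) - cos (t2 + phi)) = T /\ sin (t1 + phi) = sin (t2 + phi).
Proof.
  intro Ht. destruct (steer_sin t1 t2 (- T) Ht) as (n & a & phi & Ha & HT & Hc).
  exists n, a, (phi + PI / 2).
  replace (t1 + (phi + PI / 2)) with (PI / 2 + (t1 + phi)) by ring.
  replace (t2 + (phi + PI / 2)) with (PI / 2 + (t2 + phi)) by ring.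
  rewrite <- !cos_sin. rewrite (sin_cos (t1 + phi)), (sin_cos (t2 + phi)) in HT.
  split; [exact Ha | split; [lra | exact Hc]].
Qed.

Lemma reach_set_dx_A (x1 y1 z1 x2 y2 z2 dx : R) : ~ eqmod2pi z1 z2 ->
  exists x y, reach U (x1, y1, z1) (x2, y2, z2) (x + dx, y + (y1 - y2), z1) (x, y, z2).
Proof.
  intro Hz. destruct (steer_sin z1 z2 (dx - (x1 - x2)) Hz) as (n & a & phi & Ha & HT & Hc).
  exists (x2 + INR n * a * sin (z2 + phi)), (y2 + INR n * a * cos (z2 + phi)).
  exists (repeat (omegaA a phi) n).
  split; [apply Forall_repeat, inOmega0_omegaA; exact Ha|].
  rewrite !orbit_repeat_omegaA, Hc. split; apply pt_eq; lra.
Qed.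

Lemma reach_set_dy_A (x1 y1 z1 x2 y2 z2 dy : R) : ~ eqmod2pi z1 z2 ->
  exists x y, reach U (x1, y1, z1) (x2, y2, z2) (x + (x1 - x2), y + dy, z1) (x, y, z2).
Proof.
  intro Hz. destruct (steer_cos z1 z2 (dy - (y1 - y2)) Hz) as (n & a & phi & Ha & HT & Hs).
  exists (x2 + INR n * a * sin (z2 + phi)), (y2 + INR n * a * cos (z2 + phi)).
  exists (repeat (omegaA a phi) n).
  split; [apply Forall_repeat, inOmega0_omegaA; exact Ha|].
  rewrite !orbit_repeat_omegaA, Hs. split; apply pt_eq; lra.
Qed.

Lemma reach_set_dxy_A (x1 y1 z1 x2 y2 z2 dx dy : R) : ~ eqmod2pi z1 z2 ->
  exists x y, reach U (x1, y1, z1) (x2, y2, z2) (x + dx, y + dy, z1) (x, y, z2).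
Proof.
  intro Hz.
  destruct (reach_set_dy_A x1 y1 z1 x2 y2 z2 dy Hz) as (x & y & R1).
  destruct (reach_set_dx_A (x + (x1 - x2)) (y + dy) z1 x y z2 dx Hz) as (x' & y' & R2).
  exists x', y'. replace (y' + dy) with (y' + (y + dy - y)) by ring.
  exact (reach_trans _ _ _ _ _ _ _ R1 R2).
Qed.

Lemma reach_set_dz_B (x1 y1 z1 x2 y2 z2 dz : R) : ~ eqmod2pi x1 x2 ->
  exists y z, reach U (x1, y1, z1) (x2, y2, z2) (x1, y + (y1 - y2), z + dz) (x2, y, z).
Proof.
  intro Hx. destruct (steer_cos x1 x2 (dz - (z1 - z2)) Hx) as (n & b & phi & Hb & HT & Hs).
  exists (y2 + INR n * b * sin (x2 + phi)), (z2 + INR n * b * cos (x2 + phi)).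
  exists (repeat (omegaB b phi) n).
  split; [apply Forall_repeat, inOmega0_omegaB; exact Hb|].
  rewrite !orbit_repeat_omegaB, Hs. split; apply pt_eq; lra.
Qed.

Lemma reach_set_dx_C (x1 y1 z1 x2 y2 z2 dx : R) : ~ eqmod2pi y1 y2 ->
  exists x z, reach U (x1, y1, z1) (x2, y2, z2) (x + dx, y1, z + (z1 - z2)) (x, y2, z).
Proof.
  intro Hy. destruct (steer_cos y1 y2 (dx - (x1 - x2)) Hy) as (n & c & phi & Hc & HT & Hs).
  exists (x2 + INR n * c * cos (y2 + phi)), (z2 + INR n * c * sin (y2 + phi)).
  exists (repeat (omegaC c phi) n).
  split; [apply Forall_repeat, inOmega0_omegaC; exact Hc|].
  rewrite !orbit_repeat_omegaC, Hs. split; apply pt_eq; lra.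
Qed.

Lemma reach_dx_apart (p1 p2 : pt) : ~ eqT3 p1 p2 ->
  exists x1 y1 z1 x2 y2 z2,
    reach U p1 p2 (x1, y1, z1) (x2, y2, z2) /\ ~ eqmod2pi x1 x2.
Proof.
  destruct p1 as [[x1 y1] z1], p2 as [[x2 y2] z2]. cbn. intro Hoff.
  assert (Hpi : forall x, ~ eqmod2pi (x + PI) x)
    by (intro x; apply not_eqmod2pi_of_sub_bounds; pose proof PI_RGT_0; lra).
  destruct (classic (eqmod2pi x1 x2)) as [Hx|Hx].
  2: { do 6 eexists. split; [apply reach_refl | exact Hx]. }
  destruct (classic (eqmod2pi z1 z2)) as [Hz|Hz].
  - assert (Hy : ~ eqmod2pi y1 y2) by tauto.
    destruct (reach_set_dx_C x1 y1 z1 x2 y2 z2 PI Hy) as (x & z & R).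
    do 6 eexists. split; [exact R | apply Hpi].
  - destruct (reach_set_dxy_A x1 y1 z1 x2 y2 z2 PI 0 Hz) as (x & y & R).
    do 6 eexists. split; [exact R | apply Hpi].
Qed.

Lemma reach_synchronized (p1 p2 : pt) (d : R) : ~ eqT3 p1 p2 -> 0 < d < 2 * PI ->
  exists x y z, reach U p1 p2 (x, y, z + d) (x, y, z).
Proof.
  intros Hoff Hd.
  destruct (reach_dx_apart p1 p2 Hoff) as (x1 & y1 & z1 & x2 & y2 & z2 & R1 & Hx).
  destruct (reach_set_dz_B x1 y1 z1 x2 y2 z2 d Hx) as (y & z & R2).
  destruct (reach_set_dxy_A x1 (y + (y1 - y2)) (z + d) x2 y z 0 0) as (x' & y' & R3).
  { apply not_eqmod2pi_of_sub_bounds. lra. }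
  rewrite !Rplus_0_r in R3.
  exists x', y', z. exact (reach_trans _ _ _ _ _ _ _ (reach_trans _ _ _ _ _ _ _ R1 R2) R3).
Qed.

End Steering.

Theorem lemma3p7 (U : R) (HU : 0 < U) (p1 p2 : pt) (Hoff : ~ eqT3 p1 p2)
  (eps : R) (Heps : 0 < eps) :
  exists (N1 : nat) (ws : list omega),
    length ws = N1 /\ Forall (inOmega0 U) ws /\
    (let '(x1, y1, z1) := orbit ws p1 in
     let '(x2, y2, z2) := orbit ws p2 in
     eqmod2pi x1 x2 /\ eqmod2pi y1 y2 /\ distS1 z1 z2 < eps) /\
    distT3 (orbit ws p1) (orbit ws p2) < eps.
Proof.
  pose proof PI_RGT_0.
  set (d := Rmin eps PI / 2).
  assert (Hd : 0 < d < eps /\ d <= PI).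
  { pose proof (Rmin_l eps PI). pose proof (Rmin_r eps PI).
    assert (0 < Rmin eps PI) by (apply Rmin_glb_lt; lra). unfold d. lra. }
  destruct (reach_synchronized U HU p1 p2 d Hoff) as (x & y & z & ws & Hws & E1 & E2); [lra|].
  exists (length ws), ws. rewrite E1, E2. cbv beta iota.
  split; [reflexivity | split; [exact Hws | split]].
  - split; [apply eqmod2pi_refl | split; [apply eqmod2pi_refl |]].
    rewrite distS1_eq_sub; lra.
  - rewrite distT3_vertical; lra.
Qed.
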